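(* Let $N\ge2$ and $(x,y)\in\mathbb{C}^N\times\mathbb{C}^{N-1}$. Then $(x,y)\in\mathbb{G}_{1,N}$ if and only if for every $w\in\overline{\mathbb{D}}$ one has $1-wx_1\neq0$ and \[ \left(\frac{y_1-wx_2}{1-wx_1},\dots,\frac{y_{N-1}-wx_N}{1-wx_1}\right)\in\mathbb{G}_{N-1}. \] In particular, if $(x,y)\in\mathbb{G}_{1,N}$ then $(y_1,\dots,y_{N-1})\in\mathbb{G}_{N-1}$ and $|y_1|<N-1$.
   Context: $\mathbb{D}$ is the open unit disc. $P_N(z;x):=\sum_{j=0}^{N-1}(-1)^jx_{j+1}z^j$, $Q_N(z;y):=1+\sum_{j=1}^{N-1}(-1)^jy_jz^j$, and $\mathbb{G}_{1,N}:=\{(x,y)\in\mathbb{C}^N\times\mathbb{C}^{N-1}: \text{the zero set of }(z,w)\mapsto Q_N(z;y)-wP_N(z;x)\text{ does not meet }\overline{\mathbb{D}}^2\}$. The symmetrized polydisc is $\mathbb{G}_m:=\{(s_1,\dots,s_m)\in\mathbb{C}^m: \text{all roots of } z^m+\sum_{j=1}^m(-1)^js_jz^{m-j}\text{ lie in }\mathbb{D}\}$. *)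

(* Complex numbers are modelled by an arbitrary
   numClosedFieldType C (e.g. algC). *)
From HB Require Import structures.
From mathcomp Require Import all_boot all_order all_algebra.
Set Implicit Arguments. Unset Strict Implicit. Unset Printing Implicit Defensive.
Import Order.TTheory GRing.Theory Num.Theory.
Local Open Scope ring_scope.

(* Tuples are 0-based: the paper's x_k is x`_(k-1). *)

Definition P_N (C : numClosedFieldType) (N : nat) (x : N.-tuple C) (z : C) : C :=
  \sum_(j < N) (-1) ^+ j * x`_j * z ^+ j.

Definition Q_N (C : numClosedFieldType) (N : nat) (y : N.-1.-tuple C) (z : C) : C :=
  1 + \sum_(j < N.-1) (-1) ^+ j.+1 * y`_j * z ^+ j.+1.

Definition G1N (C : numClosedFieldType) (N : nat) (x : N.-tuple C) (y : N.-1.-tuple C) : Prop :=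
  forall z w : C, `|z| <= 1 -> `|w| <= 1 -> Q_N y z - w * P_N x z != 0.

Definition symm_poly (C : numClosedFieldType) (m : nat) (s : m.-tuple C) : {poly C} :=
  'X^m + \sum_(j < m) ((-1) ^+ j.+1 * s`_j)%:P * 'X^(m - j.+1).

Definition Gsym (C : numClosedFieldType) (m : nat) (s : m.-tuple C) : Prop :=
  forall z : C, root (symm_poly s) z -> `|z| < 1.

(* Factoring out z^m, the roots of symm_poly s are the reciprocals of the zeros of
   its reciprocal polynomial 1 + sum_j (-1)^(j+1) s_j z^(j+1), so s lies in G_m iff
   that polynomial has no zero in the closed disc.  For a fixed w the reciprocal
   polynomial of the fibre tuple ((y_j - w x_(j+1)) / (1 - w x_1))_j is exactly
   (Q_N(z; y) - w P_N(z; x)) / (1 - w x_1), and 1 - w x_1 = Q_N(0; y) - w P_N(0; x)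
   cannot vanish on G_(1,N).  At w = 0 this gives y in G_(N-1); the bound on |y_1|
   is Vieta's formula y_1 = sum of the N - 1 roots, all of modulus < 1. *)
From HB Require Import structures.
From mathcomp Require Import all_boot all_order all_algebra.
From mathcomp Require Import zify ring.
Import Order.TTheory GRing.Theory Num.Theory.
Local Open Scope ring_scope.
Set Implicit Arguments.

Section SymmetrizedPolydisc.
Context {C : numClosedFieldType}.

Definition symm_recip (m : nat) (s : m.-tuple C) (z : C) : C :=
  1 + \sum_(j < m) (-1) ^+ j.+1 * s`_j * z ^+ j.+1.

Lemma symm_recip0 m (s : m.-tuple C) : symm_recip s 0 = 1.
Proof. by rewrite /symm_recip big1 ?addr0 // => j _; rewrite expr0n mulr0. Qed.

Lemma horner_symm_poly m (s : m.-tuple C) t : t != 0 ->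
  (symm_poly s).[t] = t ^+ m * symm_recip s t^-1.
Proof.
move=> t0; rewrite /symm_poly /symm_recip hornerD horner_sum hornerXn.
rewrite mulrDr mulr1 mulr_sumr; congr (_ + _); apply: eq_bigr => j _.
by rewrite hornerCM hornerXn exprB ?unitfE // exprVn mulrCA mulrA.
Qed.

Lemma Gsym_recipP m (s : m.-tuple C) :
  Gsym s <-> forall z, `|z| <= 1 -> symm_recip s z != 0.
Proof.
split=> [Gs z z1 | recip_neq0 t].
- apply/negP => /eqP recip_z.
  have z0 : z != 0 by apply: contra_eq_neq recip_z => ->; rewrite symm_recip0 oner_eq0.
  have := Gs z^-1; rewrite /root horner_symm_poly ?invr_eq0 // invrK recip_z mulr0.
  rewrite eqxx normfV invf_lt1 ?normr_gt0 // => /(_ isT).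
  by rewrite real_ltNge ?normr_real // z1.
- rewrite /root => /eqP root_t; rewrite real_ltNge ?normr_real //.
  apply/negP => t1.
  have t0 : t != 0 by apply: contraTneq t1 => ->; rewrite normr0 ler10.
  have := recip_neq0 t^-1.
  rewrite normfV invr_le1 ?unitfE ?normr_gt0 ?normr_eq0 // => /(_ t1).
  move: root_t; rewrite horner_symm_poly // => /eqP.
  by rewrite mulf_eq0 expf_eq0 (negbTE t0) andbF /= => ->.
Qed.

Lemma size_symm_poly_tail m (s : m.-tuple C) :
  (size (\sum_(j < m) ((-1) ^+ j.+1 * s`_j)%:P * 'X^(m - j.+1))%R <= m)%N.
Proof.
apply: leq_trans (size_sum _ _ _) _; apply/bigmax_leqP => j _.
rewrite mul_polyC; apply: leq_trans (size_scale_leq _ _) _.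
by rewrite size_polyXn; have := ltn_ord j; lia.
Qed.

Lemma size_symm_poly m (s : m.-tuple C) : size (symm_poly s) = m.+1.
Proof.
by rewrite /symm_poly size_polyDl size_polyXn // ltnS size_symm_poly_tail.
Qed.

Lemma symm_poly_monic m (s : m.-tuple C) : symm_poly s \is monic.
Proof.
rewrite monicE /symm_poly lead_coefDl ?lead_coefXn //.
by rewrite size_polyXn ltnS size_symm_poly_tail.
Qed.

Lemma coef_symm_poly_subleading m (s : m.+1.-tuple C) : (symm_poly s)`_m = - s`_0.
Proof.
rewrite /symm_poly coefD coefXn (ltn_eqF (ltnSn m)) add0r coef_sum big_ord_recl.
rewrite coefCM coefXn /= subSS subn0 eqxx mulr1 expr1 mulN1r.
rewrite big1 ?addr0 // => j _; rewrite coefCM coefXn /= subSS.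
by rewrite (_ : (m == m - j.+1)%N = false) ?mulr0 //; have := ltn_ord j; lia.
Qed.

Lemma Gsym_norm_lt m (s : m.+1.-tuple C) : Gsym s -> `|s`_0| < m.+1%:R.
Proof.
move=> Gs; have [r Ds] := closed_field_poly_normal (symm_poly s).
rewrite (eqP (symm_poly_monic s)) scale1r in Ds.
have size_r : size r = m.+1.
  by have := size_symm_poly s; rewrite Ds size_prod_XsubC => -[].
have r_lt1 z : z \in r -> `|z| < 1 by move=> rz; apply: Gs; rewrite Ds root_prod_XsubC.
have := @coefPn_prod_XsubC _ r; rewrite size_r -Ds coef_symm_poly_subleading.
move=> /(_ isT) /oppr_inj ->; apply: le_lt_trans (ler_norm_sum _ _ _) _.
rewrite -size_r -sum1_size natr_sum big_seq [ltRHS]big_seq ltr_sum //.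
by case: r size_r {Ds r_lt1} => // a r _ /=; rewrite mem_head.
Qed.

Lemma Q_N_recip N (y : N.-1.-tuple C) z : Q_N y z = symm_recip y z.
Proof. by []. Qed.

Lemma P_N0 N (x : N.-tuple C) : P_N x 0 = x`_0.
Proof.
case: N x => [|n] x; first by rewrite /P_N big_ord0 tuple0.
rewrite /P_N big_ord_recl big1 ?addr0 ?expr0 ?mulr1 ?mul1r // => j _.
by rewrite expr0n mulr0.
Qed.

Definition fibre N (x : N.-tuple C) (y : N.-1.-tuple C) (w : C) :=
  [tuple (y`_j - w * x`_(j.+1)) / (1 - w * x`_0) | j < N.-1].

Lemma Q_N_sub_P_N_fibre N (x : N.-tuple C) (y : N.-1.-tuple C) w z :
  1 - w * x`_0 != 0 ->
  Q_N y z - w * P_N x z = (1 - w * x`_0) * symm_recip (fibre x y w) z.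
Proof.
move=> denom_neq0; rewrite /Q_N /P_N /symm_recip /fibre.
case: N x y denom_neq0 => [|n] x y denom_neq0.
  by rewrite !big_ord0 tuple0 /=; ring.
have scaled_tail : (1 - w * x`_0) * \sum_(i < n.+1.-1) (-1) ^+ i.+1 *
      [tuple (y`_j - w * x`_(j.+1)) / (1 - w * x`_0) | j < n.+1.-1]`_i * z ^+ i.+1
  = \sum_(i < n) (-1) ^+ i.+1 * y`_i * z ^+ i.+1
    - w * \sum_(i < n) (-1) ^+ (lift ord0 i) * x`_(lift ord0 i) * z ^+ (lift ord0 i).
  rewrite !mulr_sumr -sumrB; apply: eq_bigr => i _.
  by rewrite nth_mktuple lift0; field.
rewrite [RHS]mulrDr [in RHS]mulr1 scaled_tail (big_ord_recl n).
by rewrite !expr0 !mulr1 mul1r; ring.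
Qed.

Lemma fibre_GsymP N (x : N.-tuple C) (y : N.-1.-tuple C) w :
  1 - w * x`_0 != 0 ->
  (forall z, `|z| <= 1 -> Q_N y z - w * P_N x z != 0) <-> Gsym (fibre x y w).
Proof.
move=> denom_neq0; rewrite (Gsym_recipP (fibre x y w)).
split=> nz z z1; have := nz z z1.
  by rewrite Q_N_sub_P_N_fibre // mulf_eq0 negb_or => /andP[].
by rewrite Q_N_sub_P_N_fibre // => recip_neq0; rewrite mulf_neq0.
Qed.

End SymmetrizedPolydisc.

Theorem mainTheorem10 (C : numClosedFieldType) (N : nat) (hN : (2 <= N)%N)
    (x : N.-tuple C) (y : N.-1.-tuple C) :
  (G1N x y <->
     (forall w : C, `|w| <= 1 ->
        1 - w * x`_0 != 0 /\
        Gsym [tuple (y`_j - w * x`_(j.+1)) / (1 - w * x`_0) | j < N.-1]))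
  /\ (G1N x y -> Gsym y /\ `|y`_0| < (N.-1)%:R).
Proof.
have Gsym_y : G1N x y -> Gsym y.
  move=> G; apply/Gsym_recipP => z z1.
  by have := G z 0 z1; rewrite normr0 ler01 mul0r subr0 Q_N_recip => ->.
split; last first.
  move=> G; split; first exact: Gsym_y.
  by case: N hN x y G Gsym_y => [|[|m]] // _ x y G /(_ G) /Gsym_norm_lt.
split=> [G w w1 | fibres z w z1 w1].
- have denom_neq0 : 1 - w * x`_0 != 0.
    by have := G 0 w; rewrite normr0 ler01 Q_N_recip symm_recip0 P_N0 => ->.
  by split=> //; apply/(fibre_GsymP x y w denom_neq0) => z z1; exact: G.
- have [denom_neq0 Gs] := fibres w w1.
  exact: (fibre_GsymP x y w denom_neq0).2 Gs z z1.
Qed.
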